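(* Let $N_f\ge1$ be an integer, $\beta>0$, $\lambda>0$, and let $p_r(i)=i^{-\beta}/\sum_{k=1}^{N_f}k^{-\beta}$. For $r_c>0$ let $p_c^*(i)=p_c^*(i;r_c)$, $i=1,\dots,N_f$, be an optimal solution of $\max \sum_{i=1}^{N_f}p_r(i)(1-e^{-\lambda p_c(i)\pi r_c^2})$ subject to $\sum_i p_c(i)=1$, $p_c(i)\ge0$, and define the maximal offloading ratio \[ p_o(p_c^*,r_c)=\sum_{i=1}^{N_f}p_r(i)\left(1-e^{-\lambda p_c^*(i)\pi r_c^2}\right). \] Let $F,W,\sigma_0^2,\eta,P_c,P_{\max},\alpha>0$, and for $r>0$ let $E_c^*(r)$ be the minimum value of \[ \frac{F}{W\log_2\!\left(1+\frac{P_t r^{-\alpha}}{\sigma_0^2}\right)}\left(\frac{1}{\eta}P_t+P_c\right)\quad\text{over } 0<P_t\le P_{\max}. \] With $f(p,r)=2\pi r\lambda p\,e^{-\lambda p\pi r^2}$, define the minimal average energy cost \[ \bar E_c^*(r_c)=\sum_{i=1}^{N_f}p_r(i)\int_0^{r_c}E_c^*(r)\,f(p_c^*(i;r_c),r)\,dr. \] Then both $p_o(p_c^*,r_c)$ and $\bar E_c^*(r_c)$ are increasing functions of the collaboration distance $r_c$.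
   Context: Interpretation: users form a Poisson point process of density $\lambda$, file requests follow a Zipf distribution over $N_f$ files, users cache files with the optimized probabilities $p_c^*(i)$, a user is served via a D2D link only by a caching user within distance $r_c$ (the collaboration distance), $f(p_c^*(i),r)$ is the density of the distance to the nearest user caching file $i$, and $E_c^*(r)$ is the minimal energy for a transmitter to send a file over a link of length $r$. *)

From Stdlib Require Import Reals.
From Coquelicot Require Import Coquelicot.
Open Scope R_scope.

Definition p_r (beta : R) (Nf : nat) (i : nat) : R :=
  Rpower (INR i) (- beta) / sum_n_m (fun k => Rpower (INR k) (- beta)) 1 Nf.

Definition p_o (beta lam : R) (Nf : nat) (pc : nat -> R) (rc : R) : R :=
  sum_n_m (fun i => p_r beta Nf i * (1 - exp (- lam * pc i * PI * rc ^ 2))) 1 Nf.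

Definition feasible_pc (Nf : nat) (pc : nat -> R) : Prop :=
  sum_n_m pc 1 Nf = 1 /\ (forall i, (1 <= i <= Nf)%nat -> 0 <= pc i).

Definition optimal_pc (beta lam : R) (Nf : nat) (rc : R) (pc : nat -> R) : Prop :=
  feasible_pc Nf pc /\
  (forall q, feasible_pc Nf q -> p_o beta lam Nf q rc <= p_o beta lam Nf pc rc).

Definition log2 (x : R) : R := ln x / ln 2.

Definition energy_cost (F W sigma2 eta Pc alpha r Pt : R) : R :=
  F / (W * log2 (1 + Pt * Rpower r (- alpha) / sigma2)) * (/ eta * Pt + Pc).

(* E_c^*(r): minimal value of the energy cost over 0 < Pt <= Pmax
   (taken as the infimum, which is attained) *)
Definition Ec_star (F W sigma2 eta Pc Pmax alpha r : R) : R :=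
  real (Glb_Rbar (fun y => exists Pt, 0 < Pt <= Pmax /\
                             y = energy_cost F W sigma2 eta Pc alpha r Pt)).

(* density of the distance to the nearest user caching the file *)
Definition f_dist (lam p r : R) : R :=
  2 * PI * r * lam * p * exp (- lam * p * PI * r ^ 2).

Definition Ebar (beta lam : R) (Nf : nat) (F W sigma2 eta Pc Pmax alpha : R)
    (pc : nat -> R) (rc : R) : R :=
  sum_n_m (fun i => p_r beta Nf i *
    RInt (fun r => Ec_star F W sigma2 eta Pc Pmax alpha r * f_dist lam (pc i) r) 0 rc)
    1 Nf.

From Stdlib Require Import Reals Lra Lia Classical.
From Coquelicot Require Import Coquelicot.
Open Scope R_scope.

(* The optimal caching probabilities are a water-filling solution: with [a = lam PI rc^2],
   [p_r(i) exp (- a p_c(i)) = min (p_r(i), mu)], and the water level [mu] decreases as [rc] grows.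
   The offloading ratio increases because the old allocation already gains from the larger disc
   and the new allocation is optimal.  [Ebar] is the integral of the nondecreasing function
   [E_c^*] against the mixture of nearest-caching-user distance laws on [0, rc].  For every
   [t <= r1], water-filling makes the mass of [[t, r2]] under the new allocation dominate the mass
   of [[t, r1]] under the old one: file by file the gap is at least a common multiple of
   [a1 p_i - rho a2 q_i], which sums to zero.  Tail dominance compares the integrals of a
   nondecreasing function by Abel summation over a fine grid.  [E_c^*] is nondecreasing, and
   continuous (hence integrable) because [E_c^*(r) r^(-alpha)] is nonincreasing. *)

Lemma sum_n_m_Rext (a b : nat -> R) n m :
  (forall k, (n <= k <= m)%nat -> a k = b k) -> @eq R (sum_n_m a n m) (sum_n_m b n m).
Proof. apply sum_n_m_ext_loc. Qed.

Lemma sum_n_m_le_loc (a b : nat -> R) n m :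
  (forall k, (n <= k <= m)%nat -> a k <= b k) -> sum_n_m a n m <= sum_n_m b n m.
Proof.
  intros Hab. rewrite (sum_n_m_Rext a (fun k => Rmin (a k) (b k))).
  - apply sum_n_m_le. intros k. apply Rmin_r.
  - intros k Hk. rewrite Rmin_left; auto.
Qed.

Lemma sum_n_m_Rplus (a b : nat -> R) n m :
  @eq R (sum_n_m (fun k => a k + b k) n m) (sum_n_m a n m + sum_n_m b n m).
Proof. apply (sum_n_m_plus a b). Qed.

Lemma sum_n_m_Rmult_l (c : R) (a : nat -> R) n m :
  @eq R (sum_n_m (fun k => c * a k) n m) (c * sum_n_m a n m).
Proof. apply (sum_n_m_mult_l c a). Qed.

Lemma sum_n_m_Rminus (a b : nat -> R) n m :
  @eq R (sum_n_m (fun k => a k - b k) n m) (sum_n_m a n m - sum_n_m b n m).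
Proof.
  rewrite (sum_n_m_Rext _ (fun k => a k + (-1) * b k)) by (intros; ring).
  rewrite sum_n_m_Rplus, sum_n_m_Rmult_l. ring.
Qed.

Lemma sum_n_m_Rconst_0 n m : @eq R (sum_n_m (fun _ => 0) n m) 0.
Proof. rewrite sum_n_m_const. apply Rmult_0_r. Qed.

Lemma sum_n_m_nonneg (a : nat -> R) n m :
  (forall k, (n <= k <= m)%nat -> 0 <= a k) -> 0 <= sum_n_m a n m.
Proof. intros Ha. rewrite <- (sum_n_m_Rconst_0 n m). now apply sum_n_m_le_loc. Qed.

Lemma sum_n_m_pos_ex (a : nat -> R) n m :
  0 < sum_n_m a n m -> exists k, (n <= k <= m)%nat /\ 0 < a k.
Proof.
  intros Hpos. apply NNPP. intros Hnone.
  assert (sum_n_m a n m <= 0); [|lra].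
  rewrite <- (sum_n_m_Rconst_0 n m). apply sum_n_m_le_loc. intros k Hk.
  apply Rnot_lt_le. intros Hak. apply Hnone. eauto.
Qed.

Lemma sum_n_m_indicator (x : R) i n m : (n <= i <= m)%nat ->
  @eq R (sum_n_m (fun k => if Nat.eqb k i then x else 0) n m) x.
Proof.
  intros Hi.
  assert (Hzero : forall n' m', (forall k, (n' <= k <= m')%nat -> k <> i) ->
    @eq R (sum_n_m (fun k => if Nat.eqb k i then x else 0) n' m') 0).
  { intros n' m' Hne. transitivity (sum_n_m (fun _ : nat => 0) n' m'); [|apply sum_n_m_Rconst_0].
    apply sum_n_m_Rext. intros k Hk. now rewrite (proj2 (Nat.eqb_neq k i) (Hne k Hk)). }
  rewrite (sum_n_m_Chasles _ n i m) by lia.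
  rewrite (Hzero (S i) m) by lia.
  destruct (Nat.eq_dec n i) as [<-|Hni].
  - rewrite sum_n_n, Nat.eqb_refl. apply Rplus_0_r.
  - destruct i as [|i']; [lia|].
    rewrite sum_n_Sm, Hzero, Nat.eqb_refl by lia. unfold plus; simpl. ring.
Qed.

(** * Water-filling structure of the optimal caching probabilities *)

Lemma exp_le_compat x y : x <= y -> exp x <= exp y.
Proof. intros [Hlt|Heq]; [now apply Rlt_le, exp_increasing|rewrite Heq; apply Rle_refl]. Qed.

Lemma p_r_pos beta Nf i : (1 <= Nf)%nat -> 0 < p_r beta Nf i.
Proof.
  intros HN. unfold p_r, Rpower. apply Rdiv_lt_0_compat; [apply exp_pos|].
  rewrite (sum_Sn_m _ 1 Nf) by lia.
  apply Rplus_lt_le_0_compat; [apply exp_pos|].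
  apply sum_n_m_nonneg. intros k _. apply Rlt_le, exp_pos.
Qed.

Definition caching_gain (w : nat -> R) (a : R) (Nf : nat) (x : nat -> R) : R :=
  sum_n_m (fun i => w i * (1 - exp (- (a * x i)))) 1 Nf.

Definition maximizes_caching_gain (w : nat -> R) (a : R) (Nf : nat) (x : nat -> R) : Prop :=
  feasible_pc Nf x /\
  forall y, feasible_pc Nf y -> caching_gain w a Nf y <= caching_gain w a Nf x.

Lemma p_o_caching_gain beta lam Nf pc rc :
  p_o beta lam Nf pc rc = caching_gain (p_r beta Nf) (lam * PI * rc ^ 2) Nf pc.
Proof. apply sum_n_m_Rext. intros i _. do 3 f_equal. ring. Qed.

Lemma optimal_pc_maximizes_caching_gain beta lam Nf rc pc :
  optimal_pc beta lam Nf rc pc ->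
  maximizes_caching_gain (p_r beta Nf) (lam * PI * rc ^ 2) Nf pc.
Proof.
  intros [Hfeas Hopt]. split; [exact Hfeas|].
  intros y Hy. rewrite <- !p_o_caching_gain. auto.
Qed.

Lemma exists_pos_mul_exp_lt (A B a x : R) : 0 < A < B -> 0 < a -> 0 < x ->
  exists d, 0 < d <= x /\ A * exp (a * d) < B.
Proof.
  intros HAB Ha Hx.
  assert (HBA : 1 < B / A).
  { unfold Rdiv. rewrite <- (Rinv_r A) by lra.
    apply Rmult_lt_compat_r; [apply Rinv_0_lt_compat|]; lra. }
  set (L := ln (B / A)).
  assert (HL : 0 < L) by (unfold L; rewrite <- ln_1; apply ln_increasing; lra).
  exists (Rmin x (L / (2 * a))). split.
  { split; [apply Rmin_pos; [auto|apply Rdiv_lt_0_compat; lra]|apply Rmin_l]. }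
  assert (Had : a * Rmin x (L / (2 * a)) <= L / 2).
  { replace (L / 2) with (a * (L / (2 * a))) by (field; lra).
    apply Rmult_le_compat_l; [lra|apply Rmin_r]. }
  assert (Hexp : exp (a * Rmin x (L / (2 * a))) < B / A).
  { rewrite <- (exp_ln (B / A)) by lra. apply exp_increasing. fold L. lra. }
  replace B with (A * (B / A)) by (field; lra).
  apply Rmult_lt_compat_l; lra.
Qed.

Section WaterFilling.

Variables (w : nat -> R) (a : R) (Nf : nat).
Hypothesis w_pos : forall i, 0 < w i.
Hypothesis a_pos : 0 < a.

(* Moving a small mass [d] from file [i] to file [j] changes the gain by
   [(1 - exp (-a d)) (A_j - A_i exp (a d))], with [A_k = w k exp (-a x k)]. *)
Lemma maximizer_exchange x i j :
  maximizes_caching_gain w a Nf x -> (1 <= i <= Nf)%nat -> (1 <= j <= Nf)%nat -> 0 < x i ->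
  w j * exp (- (a * x j)) <= w i * exp (- (a * x i)).
Proof.
  intros [[Hsum Hnn] Hopt] Hi Hj Hxi.
  set (Ai := w i * exp (- (a * x i))). set (Aj := w j * exp (- (a * x j))).
  apply Rnot_lt_le. intros Hlt.
  assert (HAi : 0 < Ai) by (apply Rmult_lt_0_compat; [auto|apply exp_pos]).
  assert (Hij : i <> j) by (intros <-; unfold Ai, Aj in Hlt; lra).
  destruct (exists_pos_mul_exp_lt Ai Aj a (x i)) as [d [Hd Hgap]]; [lra|auto|auto|].
  set (y := fun k => x k - (if Nat.eqb k i then d else 0) + (if Nat.eqb k j then d else 0)).
  assert (Hy : feasible_pc Nf y).
  { split.
    - unfold y. rewrite sum_n_m_Rplus, sum_n_m_Rminus, Hsum, !sum_n_m_indicator by lia. lra.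
    - intros k Hk. unfold y.
      destruct (Nat.eqb_spec k i), (Nat.eqb_spec k j); subst; try congruence;
        specialize (Hnn _ Hk); lra. }
  assert (Hgain : caching_gain w a Nf y - caching_gain w a Nf x =
                  (1 - exp (- (a * d))) * (Aj - Ai * exp (a * d))).
  { unfold caching_gain. rewrite <- sum_n_m_Rminus.
    rewrite (sum_n_m_Rext _ (fun k => (if Nat.eqb k i then Ai * (1 - exp (a * d)) else 0)
                                     + (if Nat.eqb k j then Aj * (1 - exp (- (a * d))) else 0))).
    - rewrite sum_n_m_Rplus, !sum_n_m_indicator by lia.
      replace (exp (- (a * d))) with (/ exp (a * d)) by (rewrite exp_Ropp; reflexivity).
      field. apply exp_neq_0.
    - intros k _. unfold y, Ai, Aj.
      destruct (Nat.eqb_spec k i), (Nat.eqb_spec k j); subst; try congruence.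
      + replace (- (a * (x i - d + 0))) with (- (a * x i) + a * d) by ring.
        rewrite exp_plus. ring.
      + replace (- (a * (x j - 0 + d))) with (- (a * x j) + - (a * d)) by ring.
        rewrite exp_plus. ring.
      + replace (x k - 0 + 0) with (x k) by ring. ring. }
  assert (Hpos : 0 < (1 - exp (- (a * d))) * (Aj - Ai * exp (a * d))).
  { apply Rmult_lt_0_compat; [|lra].
    rewrite <- exp_0. assert (exp (- (a * d)) < exp 0) by (apply exp_increasing; nra). lra. }
  specialize (Hopt y Hy). lra.
Qed.

Lemma maximizer_water_filling x : maximizes_caching_gain w a Nf x ->
  exists mu, 0 < mu /\
    forall i, (1 <= i <= Nf)%nat -> w i * exp (- (a * x i)) = Rmin (w i) mu.
Proof.
  intros Hmax. pose proof Hmax as [[Hsum Hnn] _].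
  destruct (sum_n_m_pos_ex x 1 Nf) as [i0 [Hi0 Hx0]]; [rewrite Hsum; lra|].
  exists (w i0 * exp (- (a * x i0))).
  split; [apply Rmult_lt_0_compat; [auto|apply exp_pos]|].
  intros i Hi.
  assert (Hexch := maximizer_exchange x i0 i Hmax Hi0 Hi Hx0).
  destruct (Rle_lt_or_eq_dec 0 (x i) (Hnn i Hi)) as [Hxi|Hxi].
  - assert (Hexch' := maximizer_exchange x i i0 Hmax Hi Hi0 Hxi).
    assert (exp (- (a * x i)) <= 1) by (rewrite <- exp_0; apply exp_le_compat; nra).
    specialize (w_pos i). rewrite Rmin_right; nra.
  - rewrite <- Hxi in *. rewrite Rmult_0_r, Ropp_0, exp_0, Rmult_1_r in *.
    rewrite Rmin_left; auto.
Qed.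

End WaterFilling.

Lemma water_level_antitone (w : nat -> R) Nf a1 a2 x y m1 m2 :
  (forall i, 0 < w i) -> a1 < a2 -> feasible_pc Nf x -> feasible_pc Nf y ->
  (forall i, (1 <= i <= Nf)%nat -> w i * exp (- (a1 * x i)) = Rmin (w i) m1) ->
  (forall i, (1 <= i <= Nf)%nat -> w i * exp (- (a2 * y i)) = Rmin (w i) m2) ->
  m2 <= m1.
Proof.
  intros Hw Ha [Sx _] [Sy _] Hx Hy. apply Rnot_lt_le. intros Hm.
  assert (Hle : sum_n_m (fun i => a2 * y i) 1 Nf <= sum_n_m (fun i => a1 * x i) 1 Nf).
  { apply sum_n_m_le_loc. intros i Hi. apply Rnot_lt_le. intros Hlt.
    assert (exp (- (a2 * y i)) < exp (- (a1 * x i))) by (apply exp_increasing; lra).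
    assert (Rmin (w i) m1 <= Rmin (w i) m2) by (apply Rle_min_compat_l; lra).
    specialize (Hx i Hi). specialize (Hy i Hi). specialize (Hw i). nra. }
  rewrite !sum_n_m_Rmult_l, Sx, Sy in Hle. lra.
Qed.

Lemma p_o_monotone_rc beta lam Nf pc r1 r2 : (1 <= Nf)%nat -> 0 <= lam ->
  (forall i, (1 <= i <= Nf)%nat -> 0 <= pc i) -> 0 <= r1 <= r2 ->
  p_o beta lam Nf pc r1 <= p_o beta lam Nf pc r2.
Proof.
  intros HN Hl Hpc Hr. rewrite !p_o_caching_gain. apply sum_n_m_le_loc. intros i Hi.
  apply Rmult_le_compat_l; [apply Rlt_le, p_r_pos; auto|].
  assert (exp (- (lam * PI * r2 ^ 2 * pc i)) <= exp (- (lam * PI * r1 ^ 2 * pc i))); [|lra].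
  pose proof PI_RGT_0. pose proof (Hpc i Hi).
  apply exp_le_compat, Ropp_le_contravar, Rmult_le_compat_r; [auto|].
  apply Rmult_le_compat_l; [nra|]. apply pow_incr. lra.
Qed.

Lemma p_o_optimal_monotone beta lam Nf p q r1 r2 : (1 <= Nf)%nat -> 0 <= lam ->
  0 <= r1 <= r2 -> optimal_pc beta lam Nf r1 p -> optimal_pc beta lam Nf r2 q ->
  p_o beta lam Nf p r1 <= p_o beta lam Nf q r2.
Proof.
  intros HN Hl Hr [Hp _] [_ Hq].
  apply Rle_trans with (p_o beta lam Nf p r2); [apply p_o_monotone_rc; auto; apply Hp|].
  now apply Hq.
Qed.

(** * Tails of the distance to the nearest caching user *)

Definition dist_ccdf (lam p r : R) : R := exp (- lam * p * PI * r ^ 2).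

Lemma water_filling_exponent (w m u : R) : 0 < w -> 0 < m -> w * exp (- u) = Rmin w m ->
  u = ln w - ln (Rmin w m).
Proof.
  intros Hw Hm Hlev. rewrite <- Hlev, ln_mult, ln_exp by (auto; apply exp_pos). ring.
Qed.

Lemma exp_sub_mul_sub_nonneg c x y : 0 <= c -> 0 <= (exp (c * x) - exp (c * y)) * (x - y).
Proof.
  intros Hc. destruct (Rle_or_lt x y) as [Hxy|Hxy].
  - assert (exp (c * x) <= exp (c * y)) by (apply exp_le_compat, Rmult_le_compat_l; auto).
    nra.
  - assert (exp (c * y) <= exp (c * x)) by (apply exp_le_compat, Rmult_le_compat_l; lra).
    nra.
Qed.

Definition tail_gap_slope (m1 m2 s rho : R) : R :=
  s * m1 * exp ((1 - s) * (rho * (ln m1 - ln m2) / (1 - rho))).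

(* Per file, with [u = a1 p_i], [v = a2 q_i], [s = t^2/r1^2] and [rho = r1^2/r2^2], the
   right-hand side is the gap between the two tails at [t]; the slope is common to all files. *)
Lemma tail_gap_lower_bound (w m1 m2 u v s rho : R) :
  0 < w -> 0 < m2 <= m1 -> w * exp (- u) = Rmin w m1 -> w * exp (- v) = Rmin w m2 ->
  0 <= s <= 1 -> 0 < rho < 1 ->
  tail_gap_slope m1 m2 s rho * (u - rho * v) <=
  w * ((exp (- (rho * s * v)) - exp (- v)) - (exp (- (s * u)) - exp (- u))).
Proof.
  intros Hw Hm Hu0 Hv Hs Hrho.
  pose proof Hu0 as Hu.
  apply water_filling_exponent in Hu; [|lra|lra]. apply water_filling_exponent in Hv; [|lra|lra].
  assert (HK : 0 <= tail_gap_slope m1 m2 s rho).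
  { unfold tail_gap_slope. apply Rmult_le_pos; [nra|apply Rlt_le, exp_pos]. }
  destruct (Rle_or_lt w m1) as [Hwm|Hwm].
  - rewrite Rmin_left in Hu by lra. replace u with 0 in * by lra.
    assert (Hv0 : 0 <= v).
    { rewrite Hv.
      assert (ln (Rmin w m2) <= ln w) by (apply ln_le; [apply Rmin_pos|apply Rmin_l]; lra).
      lra. }
    assert (rho * s <= 1) by nra.
    assert (exp (- v) <= exp (- (rho * s * v))) by (apply exp_le_compat; nra).
    replace (- (s * 0)) with 0 by ring. rewrite Ropp_0, exp_0.
    assert (0 <= tail_gap_slope m1 m2 s rho * (rho * v)) by (apply Rmult_le_pos; nra).
    assert (0 <= w * (exp (- (rho * s * v)) - exp (- v))) by (apply Rmult_le_pos; lra).
    lra.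
  - rewrite Rmin_right in Hu0, Hu by lra. rewrite Rmin_right in Hv by lra.
    set (D := ln m1 - ln m2). set (ustar := rho * D / (1 - rho)).
    assert (HD : 0 <= D) by (unfold D; assert (ln m2 <= ln m1) by (apply ln_le; lra); lra).
    assert (Hvu : v = u + D) by (unfold D; lra).
    assert (Hlin : u - rho * v = (1 - rho) * (u - ustar)).
    { unfold ustar. rewrite Hvu. field. apply Rgt_not_eq. lra. }
    assert (Hy : w * exp (- (s * u)) = m1 * exp ((1 - s) * u)).
    { rewrite <- Hu0. rewrite Rmult_assoc, <- exp_plus. f_equal. f_equal. ring. }
    assert (Hsplit : exp (- (rho * s * v)) = exp (- (s * u)) * exp (s * (u - rho * v)))
      by (rewrite <- exp_plus; f_equal; ring).
    assert (Htangent := exp_ineq1_le (s * (u - rho * v))).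
    assert (exp (- v) <= exp (- u)) by (apply exp_le_compat; lra).
    assert (Hgap : m1 * exp ((1 - s) * u) * (s * (u - rho * v)) <=
                   w * ((exp (- (rho * s * v)) - exp (- v)) - (exp (- (s * u)) - exp (- u)))).
    { rewrite <- Hy, Hsplit.
      assert (0 < w * exp (- (s * u))) by (apply Rmult_lt_0_compat; [lra|apply exp_pos]).
      nra. }
    assert (Hmono := exp_sub_mul_sub_nonneg (1 - s) u ustar ltac:(lra)).
    assert (0 <= s * (1 - rho) * m1 *
                 ((exp ((1 - s) * u) - exp ((1 - s) * ustar)) * (u - ustar)))
      by (apply Rmult_le_pos; [apply Rmult_le_pos; nra|exact Hmono]).
    unfold tail_gap_slope. fold D ustar. rewrite Hlin in *. nra.
Qed.

Lemma optimal_tail_dominance beta lam Nf p q r1 r2 t :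
  (1 <= Nf)%nat -> 0 < lam -> 0 < r1 < r2 ->
  optimal_pc beta lam Nf r1 p -> optimal_pc beta lam Nf r2 q -> 0 <= t <= r1 ->
  sum_n_m (fun i => p_r beta Nf i * (dist_ccdf lam (p i) t - dist_ccdf lam (p i) r1)) 1 Nf <=
  sum_n_m (fun i => p_r beta Nf i * (dist_ccdf lam (q i) t - dist_ccdf lam (q i) r2)) 1 Nf.
Proof.
  intros HN Hl Hr Hp Hq Ht.
  apply optimal_pc_maximizes_caching_gain in Hp, Hq.
  set (w := p_r beta Nf) in *.
  set (a1 := lam * PI * r1 ^ 2) in *. set (a2 := lam * PI * r2 ^ 2) in *.
  assert (Hw : forall i, 0 < w i) by (intros; apply p_r_pos; auto).
  assert (HPI := PI_RGT_0).
  assert (Hr1 : r1 <> 0) by (apply Rgt_not_eq; lra).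
  assert (Hr2 : r2 <> 0) by (apply Rgt_not_eq; lra).
  assert (Hsq : 0 < r1 ^ 2 < r2 ^ 2) by (simpl; split; nra).
  assert (Ha1 : 0 < a1) by (unfold a1; apply Rmult_lt_0_compat; nra).
  assert (Ha12 : a1 < a2) by (unfold a1, a2; apply Rmult_lt_compat_l; nra).
  destruct (maximizer_water_filling w a1 Nf Hw Ha1 p Hp) as [m1 [Hm1 S1]].
  destruct (maximizer_water_filling w a2 Nf Hw ltac:(lra) q Hq) as [m2 [Hm2 S2]].
  destruct Hp as [Fp _], Hq as [Fq _].
  assert (Hm := water_level_antitone w Nf a1 a2 p q m1 m2 Hw Ha12 Fp Fq S1 S2).
  set (s := t ^ 2 / r1 ^ 2). set (rho := r1 ^ 2 / r2 ^ 2).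
  assert (Hs : 0 <= s <= 1).
  { unfold s. split; [apply Rmult_le_pos; [nra|apply Rlt_le, Rinv_0_lt_compat; lra]|].
    apply (Rdiv_le_1 (t ^ 2) (r1 ^ 2) ltac:(lra)), pow_incr. lra. }
  assert (Hrho : 0 < rho < 1).
  { unfold rho. split; [apply Rdiv_lt_0_compat; lra|].
    apply (Rdiv_lt_1 (r1 ^ 2) (r2 ^ 2) ltac:(lra)). lra. }
  destruct Fp as [Sp _], Fq as [Sq _].
  set (K := tail_gap_slope m1 m2 s rho).
  apply Rge_le, Rminus_ge, Rle_ge. rewrite <- sum_n_m_Rminus.
  apply Rle_trans with (sum_n_m (fun i => K * (a1 * p i - rho * (a2 * q i))) 1 Nf).
  - rewrite sum_n_m_Rmult_l, sum_n_m_Rminus, !sum_n_m_Rmult_l, Sp, Sq.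
    replace (a1 * 1 - rho * (a2 * 1)) with 0 by (unfold a1, a2, rho; field; auto). lra.
  - apply sum_n_m_le_loc. intros i Hi.
    eapply Rle_trans; [apply (tail_gap_lower_bound (w i) m1 m2 (a1 * p i) (a2 * q i) s rho); auto|].
    right. rewrite <- Rmult_minus_distr_l. unfold dist_ccdf, a1, a2, s, rho.
    f_equal. f_equal; f_equal; f_equal; field; auto.
Qed.

(** * Integrals of nondecreasing functions under tail dominance *)

Lemma continuous_of_Rabs_sub_le (f g : R -> R) x :
  continuous g x -> g x = 0 -> locally x (fun y => Rabs (f y - f x) <= g y) -> continuous f x.
Proof.
  intros Hg Hg0 Hloc. apply filterlim_locally. intros eps.
  generalize (filter_and _ _ Hloc (proj1 (filterlim_locally g (g x)) Hg eps)).
  apply filter_imp. intros y [Hle Hball].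
  change (Rabs (g y - g x) < eps) in Hball. change (Rabs (f y - f x) < eps).
  rewrite Hg0, Rminus_0_r in Hball. apply Rle_lt_trans with (g y); [auto|].
  eapply Rle_lt_trans; [apply Rle_abs|exact Hball].
Qed.

Lemma ex_RInt_sub (f : R -> R) a c x y : a <= x <= y -> y <= c -> ex_RInt f a c -> ex_RInt f x y.
Proof.
  intros Hxy Hyc Hf.
  apply (ex_RInt_Chasles_1 (V := R_CompleteNormedModule) _ x y c); [lra|].
  apply (ex_RInt_Chasles_2 (V := R_CompleteNormedModule) _ a x c); [lra|auto].
Qed.

Lemma RInt_Chasles_R (f : R -> R) a b c : ex_RInt f a b -> ex_RInt f b c ->
  RInt f a c = RInt f a b + RInt f b c.
Proof.
  intros Hab Hbc. symmetry. exact (RInt_Chasles (V := R_CompleteNormedModule) f a b c Hab Hbc).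
Qed.

Lemma RInt_Rscal (f : R -> R) a b k : ex_RInt f a b ->
  RInt (fun x => k * f x) a b = k * RInt f a b.
Proof. exact (RInt_scal (V := R_CompleteNormedModule) f a b k). Qed.

Lemma RInt_Rconst a b c : RInt (fun _ => c) a b = (b - a) * c.
Proof. exact (RInt_const (V := R_CompleteNormedModule) a b c). Qed.

Lemma is_RInt_sum_n_m (f : nat -> R -> R) (l : nat -> R) n m a b :
  (forall i, (n <= i <= m)%nat -> is_RInt (f i) a b (l i)) ->
  is_RInt (fun x => sum_n_m (fun i => f i x) n m) a b (sum_n_m l n m).
Proof.
  assert (Hzero : forall m', (m' < n)%nat ->
    is_RInt (fun x => sum_n_m (fun i => f i x) n m') a b (sum_n_m l n m')).
  { intros m' Hm'. replace (sum_n_m l n m') with ((b - a) * 0)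
      by (rewrite sum_n_m_zero by lia; apply Rmult_0_r).
    apply (is_RInt_ext (fun _ => 0)); [intros; now rewrite sum_n_m_zero by lia|].
    apply (is_RInt_const (V := R_CompleteNormedModule)). }
  induction m as [|m IH]; intros Hf.
  - destruct n as [|n]; [|apply Hzero; lia].
    rewrite sum_n_n. apply (is_RInt_ext (f 0%nat)); [intros; now rewrite sum_n_n|].
    apply Hf. lia.
  - destruct (Compare_dec.le_lt_dec n (S m)) as [Hn|Hn]; [|apply Hzero; lia].
    replace (sum_n_m l n (S m)) with (sum_n_m l n m + l (S m)) by (now rewrite sum_n_Sm by lia).
    apply (is_RInt_ext (fun x => sum_n_m (fun i => f i x) n m + f (S m) x)).
    { intros. now rewrite sum_n_Sm by lia. }
    apply (is_RInt_plus (V := R_NormedModule)); [apply IH|]; intros; apply Hf; lia.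
Qed.

Lemma ex_RInt_sum_n_m (f : nat -> R -> R) n m a b :
  (forall i, (n <= i <= m)%nat -> ex_RInt (f i) a b) ->
  ex_RInt (fun x => sum_n_m (fun i => f i x) n m) a b.
Proof.
  intros Hf. eexists. apply is_RInt_sum_n_m. intros i Hi.
  apply (RInt_correct (V := R_CompleteNormedModule)), Hf, Hi.
Qed.

Lemma RInt_sum_n_m (f : nat -> R -> R) n m a b :
  (forall i, (n <= i <= m)%nat -> ex_RInt (f i) a b) ->
  RInt (fun x => sum_n_m (fun i => f i x) n m) a b = sum_n_m (fun i => RInt (f i) a b) n m.
Proof.
  intros Hf. apply is_RInt_unique, is_RInt_sum_n_m. intros i Hi.
  apply (RInt_correct (V := R_CompleteNormedModule)), Hf, Hi.
Qed.

Lemma continuous_mult_vanishing (e f : R -> R) x B :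
  locally x (fun y => Rabs (e y) <= B) -> continuous f x -> f x = 0 ->
  continuous (fun y => e y * f y) x.
Proof.
  intros He Hf Hf0.
  apply (continuous_of_Rabs_sub_le _ (fun y => B * Rabs (f y))).
  - apply (@continuous_mult R_UniformSpace R_AbsRing (fun _ => B) (fun y => Rabs (f y))).
    + apply continuous_const.
    + now apply continuous_Rabs_comp.
  - rewrite Hf0, Rabs_R0. apply Rmult_0_r.
  - revert He. apply filter_imp. intros y Hy.
    rewrite Hf0, Rmult_0_r, Rminus_0_r, Rabs_mult.
    apply Rmult_le_compat_r; [apply Rabs_pos|auto].
Qed.

Lemma RInt_mul_monotone_bounds (E g : R -> R) x y : x <= y ->
  (forall s t, x <= s <= t -> t <= y -> E s <= E t) ->
  (forall t, x <= t <= y -> 0 <= g t) ->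
  ex_RInt g x y -> ex_RInt (fun t => E t * g t) x y ->
  E x * RInt g x y <= RInt (fun t => E t * g t) x y <= E y * RInt g x y.
Proof.
  intros Hxy HE Hg Hgi HEg. rewrite <- !RInt_Rscal by auto.
  split; apply RInt_le; auto; try exact (ex_RInt_scal (V := R_NormedModule) g x y _ Hgi);
    intros t Ht; apply Rmult_le_compat_r; try apply Hg; try apply HE; lra.
Qed.

Lemma nonneg_of_ge_neg_div (C q : R) : (forall n, (0 < n)%nat -> - (C / INR n) <= q) -> 0 <= q.
Proof.
  intros Hq. apply Rnot_lt_le. intros Hneg.
  pose proof (Rabs_pos C).
  destruct (archimed_cor1 (- q / (Rabs C + 1))) as [N [HN HN0]];
    [apply Rdiv_lt_0_compat; lra|].
  specialize (Hq N HN0).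
  assert (HNpos : 0 < / INR N) by (apply Rinv_0_lt_compat, lt_0_INR; auto).
  assert (Rabs C * / INR N <= Rabs C * (- q / (Rabs C + 1))) by (apply Rmult_le_compat_l; lra).
  assert (Rabs C * (- q / (Rabs C + 1)) < - q).
  { apply (Rmult_lt_reg_r (Rabs C + 1)); [lra|].
    replace (Rabs C * (- q / (Rabs C + 1)) * (Rabs C + 1)) with (Rabs C * - q) by (field; lra).
    nra. }
  assert (C * / INR N <= Rabs C * / INR N) by (apply Rmult_le_compat_r; [lra|apply Rle_abs]).
  unfold Rdiv in Hq. lra.
Qed.

Section StochasticDominance.

Variables (E g h : R -> R) (a b c M : R).
Hypotheses (a_le_b : a <= b) (b_le_c : b <= c).
Hypothesis E_monotone : forall x y, a <= x <= y -> y <= c -> E x <= E y.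
Hypothesis E_nonneg : 0 <= E a.
Hypothesis g_nonneg : forall x, a <= x <= c -> 0 <= g x.
Hypothesis h_nonneg : forall x, a <= x <= b -> 0 <= h x.
Hypothesis h_bounded : forall x, a <= x <= b -> h x <= M.
Hypotheses (g_int : ex_RInt g a c) (h_int : ex_RInt h a b)
  (Eg_int : ex_RInt (fun x => E x * g x) a c) (Eh_int : ex_RInt (fun x => E x * h x) a b).
Hypothesis tail_dominance : forall x, a <= x <= b -> RInt h x b <= RInt g x c.

Let Q x := RInt (fun t => E t * g t) x c - RInt (fun t => E t * h t) x b.
Let H x := RInt g x c - RInt h x b.

Lemma dominance_step x y : a <= x <= y -> y <= b ->
  E x * (H x - H y) - (E y - E x) * M * (y - x) <= Q x - Q y.
Proof.
  intros Hxy Hyb.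
  assert (Ig : ex_RInt g x y) by (apply (ex_RInt_sub g a c); auto; lra).
  assert (Ih : ex_RInt h x y) by (apply (ex_RInt_sub h a b); auto; lra).
  assert (IEg : ex_RInt (fun t => E t * g t) x y) by (apply (ex_RInt_sub _ a c); auto; lra).
  assert (IEh : ex_RInt (fun t => E t * h t) x y) by (apply (ex_RInt_sub _ a b); auto; lra).
  unfold Q, H.
  rewrite (RInt_Chasles_R g x y c), (RInt_Chasles_R h x y b),
    (RInt_Chasles_R (fun t => E t * g t) x y c), (RInt_Chasles_R (fun t => E t * h t) x y b)
    by first [assumption | apply (ex_RInt_sub _ a c); auto; lra
                         | apply (ex_RInt_sub _ a b); auto; lra].
  assert (HE : forall s t, x <= s <= t -> t <= y -> E s <= E t) by (intros; apply E_monotone; lra).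
  destruct (RInt_mul_monotone_bounds E g x y ltac:(lra) HE) as [Hg _];
    [intros; apply g_nonneg; lra|auto|auto|].
  destruct (RInt_mul_monotone_bounds E h x y ltac:(lra) HE) as [_ Hh];
    [intros; apply h_nonneg; lra|auto|auto|].
  assert (HhM : RInt h x y <= M * (y - x)).
  { replace (M * (y - x)) with (RInt (fun _ => M) x y) by (rewrite RInt_Rconst; apply Rmult_comm).
    apply RInt_le; [lra|auto|apply (ex_RInt_const (V := R_NormedModule))|].
    intros; apply h_bounded; lra. }
  assert (E x <= E y) by (apply E_monotone; lra).
  assert ((E y - E x) * RInt h x y <= (E y - E x) * (M * (y - x)))
    by (apply Rmult_le_compat_l; lra).
  lra.
Qed.

Lemma dominance_end : E b * H b <= Q b.
Proof.
  unfold Q, H.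
  replace (RInt h b b) with 0 by (symmetry; apply (RInt_point (V := R_CompleteNormedModule))).
  replace (RInt (fun t => E t * h t) b b) with 0
    by (symmetry; apply (RInt_point (V := R_CompleteNormedModule))).
  rewrite !Rminus_0_r.
  apply (RInt_mul_monotone_bounds E g b c); auto.
  - intros; apply E_monotone; lra.
  - intros; apply g_nonneg; lra.
  - apply (ex_RInt_sub g a c); auto; lra.
  - apply (ex_RInt_sub _ a c); auto; lra.
Qed.

(* Abel summation over the grid [b - j (b - a) / n]. *)
Lemma dominance_grid n j : (0 < n)%nat -> (j <= n)%nat ->
  let x := b - INR j * ((b - a) / INR n) in
  E x * H x - (E b - E x) * M * ((b - a) / INR n) <= Q x.
Proof.
  intros Hn. assert (HnR : 0 < INR n) by (apply lt_0_INR; auto).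
  set (d := (b - a) / INR n).
  assert (Hd : 0 <= d) by (apply Rmult_le_pos; [lra|apply Rlt_le, Rinv_0_lt_compat; auto]).
  assert (Hnd : INR n * d = b - a) by (unfold d; field; lra).
  induction j as [|j IH]; intros Hj; cbv zeta in *.
  - rewrite Rmult_0_l, Rminus_0_r, Rminus_diag, !Rmult_0_l, Rminus_0_r.
    apply dominance_end.
  - specialize (IH ltac:(lia)).
    set (y := b - INR j * d) in IH. set (x := b - INR (S j) * d).
    assert (HjR : INR (S j) <= INR n) by (apply le_INR; lia). rewrite S_INR in HjR.
    pose proof (pos_INR j).
    assert (Hxy : x = y - d) by (unfold x, y; rewrite S_INR; ring).
    assert (Hax : a <= x) by (unfold x; rewrite S_INR; nra).
    assert (Hyb : y <= b) by (unfold y; nra).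
    assert (Hstep := dominance_step x y ltac:(lra) Hyb).
    replace (y - x) with d in Hstep by lra.
    assert (E x <= E y) by (apply E_monotone; lra).
    assert (0 <= H y) by (unfold H; pose proof (tail_dominance y ltac:(lra)); lra).
    assert (0 <= (E y - E x) * H y) by (apply Rmult_le_pos; lra).
    lra.
Qed.

Lemma RInt_stochastic_dominance :
  RInt (fun x => E x * h x) a b <= RInt (fun x => E x * g x) a c.
Proof.
  assert (HM : 0 <= M) by (apply Rle_trans with (h a); [apply h_nonneg|apply h_bounded]; lra).
  assert (HEb : E a <= E b) by (apply E_monotone; lra).
  assert (HQ : 0 <= Q a).
  { apply (nonneg_of_ge_neg_div (E b * M * (b - a))). intros n Hn.
    assert (HnR : 0 < INR n) by (apply lt_0_INR; auto).
    assert (Hgrid := dominance_grid n n Hn (le_n n)). simpl in Hgrid.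
    replace (b - INR n * ((b - a) / INR n)) with a in Hgrid by (field; lra).
    set (d := (b - a) / INR n) in Hgrid.
    replace (E b * M * (b - a) / INR n) with (E b * M * d) by (unfold d; field; lra).
    assert (0 <= d) by (apply Rmult_le_pos; [lra|apply Rlt_le, Rinv_0_lt_compat; lra]).
    assert (0 <= H a) by (unfold H; pose proof (tail_dominance a ltac:(lra)); lra).
    assert (0 <= E a * H a) by (apply Rmult_le_pos; lra).
    assert (0 <= E a * M * d) by (apply Rmult_le_pos; [apply Rmult_le_pos|]; lra).
    lra. }
  unfold Q in HQ. lra.
Qed.

End StochasticDominance.

(** * Minimal transmission energy *)

Lemma ln_1p_gt_div x : 0 < x -> x / (1 + x) < ln (1 + x).
Proof.
  intros Hx.
  assert (Hln : 0 < ln (1 + x)) by (rewrite <- ln_1; apply ln_increasing; lra).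
  assert (Htan := exp_ineq1 (- ln (1 + x)) ltac:(lra)).
  rewrite exp_Ropp, exp_ln in Htan by lra.
  replace (x / (1 + x)) with (1 - / (1 + x)) by (field; lra). lra.
Qed.

Lemma ln_1p_mul_le x y : 0 < x <= y -> x * ln (1 + y) <= y * ln (1 + x).
Proof.
  intros [Hx Hxy]. destruct (Rle_lt_or_eq_dec x y Hxy) as [Hlt|<-]; [|lra].
  set (phi := fun z => z * ln (1 + x) - x * ln (1 + z)).
  assert (phi x < phi y); [|unfold phi in *; lra].
  apply (incr_function_le phi (Finite x) p_infty (fun z => ln (1 + x) - x / (1 + z)));
    simpl; try lra.
  - intros z Hz _. unfold phi. auto_derive; [lra|]. field. lra.
  - intros z Hz _. pose proof (ln_1p_gt_div x Hx).
    assert (x / (1 + z) <= x / (1 + x)); [|lra].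
    apply Rmult_le_compat_l; [lra|]. apply Rinv_le_contravar; lra.
Qed.

Lemma Rpower_pos x y : 0 < Rpower x y.
Proof. apply exp_pos. Qed.

Lemma Rpower_opp_antitone r r' alpha : 0 < r <= r' -> 0 <= alpha ->
  Rpower r' (- alpha) <= Rpower r (- alpha).
Proof.
  intros Hr Ha. rewrite !Rpower_Ropp. apply Rinv_le_contravar; [apply Rpower_pos|].
  apply Rle_Rpower_l; lra.
Qed.

Section EnergyCost.

Variables (F W sigma2 eta Pc Pmax alpha : R).
Hypotheses (F_pos : 0 < F) (W_pos : 0 < W) (sigma2_pos : 0 < sigma2) (eta_pos : 0 < eta)
  (Pc_pos : 0 < Pc) (Pmax_pos : 0 < Pmax) (alpha_pos : 0 < alpha).

Let cost := energy_cost F W sigma2 eta Pc alpha.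
Let E := Ec_star F W sigma2 eta Pc Pmax alpha.

Lemma energy_prefactor_pos Pt : 0 < Pt -> 0 < F * ln 2 * (/ eta * Pt + Pc) / W.
Proof.
  intros HPt. pose proof ln_lt_2. assert (0 < / eta) by (apply Rinv_0_lt_compat; auto).
  apply Rdiv_lt_0_compat; [|auto]. apply Rmult_lt_0_compat; nra.
Qed.

Lemma ln_1p_snr_pos r Pt : 0 < Pt -> 0 < ln (1 + Pt / sigma2 * Rpower r (- alpha)).
Proof.
  intros HPt. rewrite <- ln_1. apply ln_increasing; [lra|].
  assert (0 < Pt / sigma2 * Rpower r (- alpha)); [|lra].
  apply Rmult_lt_0_compat; [apply Rdiv_lt_0_compat|apply Rpower_pos]; auto.
Qed.

Lemma energy_cost_eq r Pt : 0 < Pt ->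
  cost r Pt = F * ln 2 * (/ eta * Pt + Pc) / W / ln (1 + Pt / sigma2 * Rpower r (- alpha)).
Proof.
  intros HPt. unfold cost, energy_cost, log2.
  pose proof (ln_1p_snr_pos r Pt HPt). pose proof ln_lt_2.
  replace (Pt * Rpower r (- alpha) / sigma2) with (Pt / sigma2 * Rpower r (- alpha))
    by (field; lra).
  field. repeat split; lra.
Qed.

Lemma energy_cost_pos r Pt : 0 < Pt -> 0 < cost r Pt.
Proof.
  intros HPt. rewrite energy_cost_eq by auto.
  apply Rdiv_lt_0_compat; [apply energy_prefactor_pos|apply ln_1p_snr_pos]; auto.
Qed.

Lemma energy_cost_monotone r r' Pt : 0 < Pt -> 0 < r <= r' -> cost r Pt <= cost r' Pt.
Proof.
  intros HPt Hr. rewrite !energy_cost_eq by auto.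
  assert (Hk : 0 < Pt / sigma2) by (apply Rdiv_lt_0_compat; auto).
  pose proof (Rpower_opp_antitone r r' alpha Hr ltac:(lra)).
  pose proof (ln_1p_snr_pos r' Pt HPt).
  assert (0 < Pt / sigma2 * Rpower r' (- alpha))
    by (apply Rmult_lt_0_compat; [auto|apply Rpower_pos]).
  unfold Rdiv at 1 3. apply Rmult_le_compat_l; [apply Rlt_le, energy_prefactor_pos; auto|].
  apply Rinv_le_contravar; [auto|]. apply ln_le; [|apply Rplus_le_compat_l, Rmult_le_compat_l]; lra.
Qed.

Lemma energy_cost_mul_Rpower_antitone r r' Pt : 0 < Pt -> 0 < r <= r' ->
  cost r' Pt * Rpower r' (- alpha) <= cost r Pt * Rpower r (- alpha).
Proof.
  intros HPt Hr. rewrite !energy_cost_eq by auto.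
  assert (HA := energy_prefactor_pos Pt HPt).
  assert (Hk : 0 < Pt / sigma2) by (apply Rdiv_lt_0_compat; auto).
  pose proof (Rpower_opp_antitone r r' alpha Hr ltac:(lra)).
  pose proof (Rpower_pos r' (- alpha)).
  pose proof (ln_1p_snr_pos r Pt HPt). pose proof (ln_1p_snr_pos r' Pt HPt).
  set (A := F * ln 2 * (/ eta * Pt + Pc) / W) in *. set (k := Pt / sigma2) in *.
  set (s := Rpower r (- alpha)) in *. set (s' := Rpower r' (- alpha)) in *.
  set (L := ln (1 + k * s)) in *. set (L' := ln (1 + k * s')) in *.
  replace (A / L' * s') with (A / (k * L * L') * (k * s' * L)) by (field; lra).
  replace (A / L * s) with (A / (k * L * L') * (k * s * L')) by (field; lra).
  apply Rmult_le_compat_l.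
  - apply Rlt_le, Rdiv_lt_0_compat; [auto|].
    apply Rmult_lt_0_compat; [apply Rmult_lt_0_compat|]; auto.
  - apply ln_1p_mul_le. split; [apply Rmult_lt_0_compat|apply Rmult_le_compat_l]; lra.
Qed.

Lemma Ec_star_spec r :
  (forall Pt, 0 < Pt <= Pmax -> E r <= cost r Pt) /\
  (forall b, (forall Pt, 0 < Pt <= Pmax -> b <= cost r Pt) -> b <= E r).
Proof.
  unfold E, Ec_star.
  set (S := fun y => exists Pt, 0 < Pt <= Pmax /\ y = energy_cost F W sigma2 eta Pc alpha r Pt).
  destruct (Glb_Rbar_correct S) as [Hlb Hglb].
  assert (H0 : Rbar_le 0 (Glb_Rbar S)).
  { apply Hglb. intros y [Pt [HPt ->]]. apply Rlt_le, energy_cost_pos. lra. }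
  assert (H1 : Rbar_le (Glb_Rbar S) (cost r Pmax)) by (apply Hlb; exists Pmax; split; [lra|auto]).
  destruct (Glb_Rbar S) as [e| |]; simpl in H0, H1; try contradiction.
  split.
  - intros Pt HPt. apply (Hlb (cost r Pt)). exists Pt. auto.
  - intros b Hb. apply (Hglb (Finite b)). intros y [Pt [HPt ->]]. apply Hb, HPt.
Qed.

Lemma Ec_star_nonneg r : 0 <= E r.
Proof.
  apply (proj2 (Ec_star_spec r)). intros Pt HPt. apply Rlt_le, energy_cost_pos. lra.
Qed.

Lemma Ec_star_le_mul r r' k : 0 < k ->
  (forall Pt, 0 < Pt <= Pmax -> cost r' Pt <= k * cost r Pt) -> E r' <= k * E r.
Proof.
  intros Hk Hcost. destruct (Ec_star_spec r) as [_ Hglb]. destruct (Ec_star_spec r') as [Hlb _].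
  replace (E r') with (k * (E r' / k)) by (field; lra).
  apply Rmult_le_compat_l; [lra|]. apply Hglb. intros Pt HPt.
  apply (Rmult_le_reg_l k); [auto|]. replace (k * (E r' / k)) with (E r') by (field; lra).
  specialize (Hlb Pt HPt). specialize (Hcost Pt HPt). lra.
Qed.

Lemma Ec_star_monotone r r' : 0 < r <= r' -> E r <= E r'.
Proof.
  intros Hr. rewrite <- (Rmult_1_l (E r')). apply Ec_star_le_mul; [lra|].
  intros Pt HPt. rewrite Rmult_1_l. apply energy_cost_monotone; lra.
Qed.

Lemma Ec_star_mul_Rpower_antitone r r' : 0 < r <= r' ->
  E r' * Rpower r' (- alpha) <= E r * Rpower r (- alpha).
Proof.
  intros Hr. pose proof (Rpower_pos r' (- alpha)).
  assert (Hk : 0 < Rpower r (- alpha) / Rpower r' (- alpha))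
    by (apply Rdiv_lt_0_compat; auto; apply Rpower_pos).
  assert (Hle : E r' <= Rpower r (- alpha) / Rpower r' (- alpha) * E r).
  { apply Ec_star_le_mul; [auto|]. intros Pt HPt.
    apply (Rmult_le_reg_r (Rpower r' (- alpha))); [auto|].
    replace (Rpower r (- alpha) / Rpower r' (- alpha) * cost r Pt * Rpower r' (- alpha))
      with (cost r Pt * Rpower r (- alpha)) by (field; lra).
    apply energy_cost_mul_Rpower_antitone; lra. }
  apply (Rmult_le_compat_r (Rpower r' (- alpha))) in Hle; [|lra].
  replace (Rpower r (- alpha) / Rpower r' (- alpha) * E r * Rpower r' (- alpha))
    with (E r * Rpower r (- alpha)) in Hle by (field; lra).
  exact Hle.
Qed.

(* Squeezed between [E r] and [E r * Rpower r (- alpha) / Rpower y (- alpha)]. *)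
Lemma Ec_star_continuous r : 0 < r -> continuous E r.
Proof.
  intros Hr. pose proof (Rpower_pos r (- alpha)).
  set (k := fun y => Rpower r (- alpha) / Rpower y (- alpha)).
  apply (continuous_of_Rabs_sub_le E (fun y => Rabs ((k y - 1) * E r))).
  - apply continuous_Rabs_comp, (@ex_derive_continuous R_AbsRing R_NormedModule).
    unfold k, Rpower. auto_derive. repeat split; [lra|apply exp_neq_0].
  - unfold k. replace (Rpower r (- alpha) / Rpower r (- alpha) - 1) with 0 by (field; lra).
    rewrite Rmult_0_l. apply Rabs_R0.
  - exists (mkposreal r Hr). intros y Hy. change (Rabs (y - r) < r) in Hy.
    apply Rabs_def2 in Hy.
    pose proof (Ec_star_nonneg r). pose proof (Rpower_pos y (- alpha)).
    assert (Hk : k y * E r * Rpower y (- alpha) = E r * Rpower r (- alpha))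
      by (unfold k; field; lra).
    destruct (Rle_or_lt r y) as [Hry|Hyr].
    + assert (E r <= E y) by (apply Ec_star_monotone; lra).
      assert (E y <= k y * E r).
      { apply (Rmult_le_reg_r (Rpower y (- alpha))); [auto|]. rewrite Hk.
        apply Ec_star_mul_Rpower_antitone. lra. }
      rewrite Rabs_pos_eq by lra. eapply Rle_trans; [|apply Rle_abs]. lra.
    + assert (E y <= E r) by (apply Ec_star_monotone; lra).
      assert (k y * E r <= E y).
      { apply (Rmult_le_reg_r (Rpower y (- alpha))); [auto|]. rewrite Hk.
        apply Ec_star_mul_Rpower_antitone. lra. }
      rewrite Rabs_left1 by lra. eapply Rle_trans; [|apply Rabs_maj2]. lra.
Qed.

End EnergyCost.

(** * Average energy cost *)

Lemma f_dist_nonneg lam p r : 0 <= lam -> 0 <= p -> 0 <= r -> 0 <= f_dist lam p r.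
Proof.
  intros Hl Hp Hr. unfold f_dist.
  pose proof PI_RGT_0. pose proof (exp_pos (- lam * p * PI * r ^ 2)).
  repeat (apply Rmult_le_pos; [|lra]). lra.
Qed.

Lemma f_dist_le lam p r b : 0 <= lam -> 0 <= p -> 0 <= r <= b ->
  f_dist lam p r <= 2 * PI * b * lam * p.
Proof.
  intros Hl Hp Hr. unfold f_dist. pose proof PI_RGT_0.
  assert (0 <= lam * p * PI * r ^ 2)
    by (apply Rmult_le_pos; [|apply pow_le]; repeat (apply Rmult_le_pos; [|lra]); lra).
  assert (exp (- lam * p * PI * r ^ 2) <= 1) by (rewrite <- exp_0; apply exp_le_compat; lra).
  rewrite <- (Rmult_1_r (2 * PI * b * lam * p)).
  apply Rmult_le_compat; [repeat (apply Rmult_le_pos; [|lra]); lra|apply Rlt_le, exp_pos| |auto].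
  apply Rmult_le_compat_r; [lra|]. apply Rmult_le_compat_r; [lra|]. apply Rmult_le_compat_l; lra.
Qed.

Lemma is_derive_dist_ccdf lam p r : is_derive (fun x => - dist_ccdf lam p x) r (f_dist lam p r).
Proof.
  unfold dist_ccdf, f_dist. auto_derive; auto.
  replace (r * (r * 1)) with (r ^ 2) by (simpl; lra). lra.
Qed.

Lemma continuous_f_dist lam p r : continuous (f_dist lam p) r.
Proof.
  apply (@ex_derive_continuous R_AbsRing R_NormedModule). unfold f_dist. auto_derive. auto.
Qed.

Lemma RInt_f_dist lam p x y : RInt (f_dist lam p) x y = dist_ccdf lam p x - dist_ccdf lam p y.
Proof.
  apply is_RInt_unique.
  replace (dist_ccdf lam p x - dist_ccdf lam p y) with (- dist_ccdf lam p y - - dist_ccdf lam p x)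
    by ring.
  apply (is_RInt_derive (V := R_CompleteNormedModule) (fun r => - dist_ccdf lam p r));
    intros; [apply is_derive_dist_ccdf|apply continuous_f_dist].
Qed.

Lemma ex_RInt_f_dist lam p x y : ex_RInt (f_dist lam p) x y.
Proof.
  apply (ex_RInt_continuous (V := R_CompleteNormedModule)). intros; apply continuous_f_dist.
Qed.

Definition mixture_density (w : nat -> R) (Nf : nat) (lam : R) (pc : nat -> R) (r : R) : R :=
  sum_n_m (fun i => w i * f_dist lam (pc i) r) 1 Nf.

Section Mixture.

Variables (w : nat -> R) (Nf : nat) (lam : R) (pc : nat -> R).
Hypotheses (w_nonneg : forall i, 0 <= w i) (lam_nonneg : 0 <= lam)
  (pc_nonneg : forall i, (1 <= i <= Nf)%nat -> 0 <= pc i).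

Lemma mixture_density_nonneg r : 0 <= r -> 0 <= mixture_density w Nf lam pc r.
Proof.
  intros Hr. apply sum_n_m_nonneg. intros i Hi.
  apply Rmult_le_pos; [auto|apply f_dist_nonneg; auto].
Qed.

Lemma mixture_density_le r b : 0 <= r <= b ->
  mixture_density w Nf lam pc r <= sum_n_m (fun i => w i * (2 * PI * b * lam * pc i)) 1 Nf.
Proof.
  intros Hr. apply sum_n_m_le_loc. intros i Hi.
  apply Rmult_le_compat_l; [auto|apply f_dist_le; auto].
Qed.

Lemma RInt_mixture_density x y :
  RInt (mixture_density w Nf lam pc) x y =
  sum_n_m (fun i => w i * (dist_ccdf lam (pc i) x - dist_ccdf lam (pc i) y)) 1 Nf.
Proof.
  transitivity (sum_n_m (fun i => RInt (fun r => w i * f_dist lam (pc i) r) x y) 1 Nf).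
  - apply (RInt_sum_n_m (fun i r => w i * f_dist lam (pc i) r)). intros i _.
    apply (ex_RInt_scal (V := R_NormedModule)), ex_RInt_f_dist.
  - apply sum_n_m_Rext. intros i _. rewrite RInt_Rscal, RInt_f_dist; [reflexivity|].
    apply ex_RInt_f_dist.
Qed.

Lemma ex_RInt_mixture_density x y : ex_RInt (mixture_density w Nf lam pc) x y.
Proof.
  apply (ex_RInt_sum_n_m (fun i r => w i * f_dist lam (pc i) r)). intros i _.
  apply (ex_RInt_scal (V := R_NormedModule)), ex_RInt_f_dist.
Qed.

End Mixture.

(* [Rpower 0 y = 1] because [ln 0 = 0], so [Ec_star] takes a junk value at [r = 0] that breaks
   monotonicity; the integrands in [Ebar] only see [r > 0]. *)
Definition Ec_star_trunc (F W sigma2 eta Pc Pmax alpha r : R) : R :=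
  if Rlt_dec 0 r then Ec_star F W sigma2 eta Pc Pmax alpha r else 0.

Section EnergyIntegral.

Variables (F W sigma2 eta Pc Pmax alpha lam : R).
Hypotheses (F_pos : 0 < F) (W_pos : 0 < W) (sigma2_pos : 0 < sigma2) (eta_pos : 0 < eta)
  (Pc_pos : 0 < Pc) (Pmax_pos : 0 < Pmax) (alpha_pos : 0 < alpha).

Let E := Ec_star F W sigma2 eta Pc Pmax alpha.
Let E0 := Ec_star_trunc F W sigma2 eta Pc Pmax alpha.

Lemma Ec_star_trunc_nonneg r : 0 <= E0 r.
Proof.
  unfold E0, Ec_star_trunc. destruct (Rlt_dec 0 r); [apply Ec_star_nonneg|]; auto; lra.
Qed.

Lemma Ec_star_trunc_monotone x y : 0 <= x <= y -> E0 x <= E0 y.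
Proof.
  intros Hxy. unfold E0, Ec_star_trunc.
  destruct (Rlt_dec 0 x), (Rlt_dec 0 y); try lra.
  - apply Ec_star_monotone; auto; lra.
  - apply Ec_star_nonneg; auto.
Qed.

Lemma continuous_Ec_star_trunc_f_dist p z : 0 <= z ->
  continuous (fun r => E0 r * f_dist lam p r) z.
Proof.
  intros Hz. destruct (Rle_lt_or_eq_dec 0 z Hz) as [Hz0|<-].
  - apply (continuous_ext_loc _ (fun r => E r * f_dist lam p r)).
    + exists (mkposreal z Hz0). intros y Hy. change (Rabs (y - z) < z) in Hy.
      apply Rabs_def2 in Hy. unfold E0, Ec_star_trunc. destruct (Rlt_dec 0 y); [reflexivity|lra].
    + apply (@continuous_mult R_UniformSpace R_AbsRing);
        [apply Ec_star_continuous|apply continuous_f_dist]; auto.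
  - apply (continuous_mult_vanishing E0 (f_dist lam p) 0 (E 1)).
    + exists (mkposreal 1 Rlt_0_1). intros y Hy. change (Rabs (y - 0) < 1) in Hy.
      apply Rabs_def2 in Hy. rewrite Rabs_pos_eq by apply Ec_star_trunc_nonneg.
      replace (E 1) with (E0 1) by (unfold E0, Ec_star_trunc; destruct (Rlt_dec 0 1); [auto|lra]).
      destruct (Rle_or_lt 0 y) as [Hy0|Hy0]; [apply Ec_star_trunc_monotone; lra|].
      unfold E0 at 1, Ec_star_trunc. destruct (Rlt_dec 0 y); [lra|apply Ec_star_trunc_nonneg].
    + apply continuous_f_dist.
    + unfold f_dist. ring.
Qed.

Lemma ex_RInt_Ec_star_trunc_f_dist p x y : 0 <= x <= y ->
  ex_RInt (fun r => E0 r * f_dist lam p r) x y.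
Proof.
  intros Hxy. apply (ex_RInt_continuous (V := R_CompleteNormedModule)).
  intros z Hz. rewrite Rmin_left, Rmax_right in Hz by lra.
  apply continuous_Ec_star_trunc_f_dist. lra.
Qed.

Lemma Ec_star_trunc_mul_mixture w Nf pc r :
  E0 r * mixture_density w Nf lam pc r = sum_n_m (fun i => w i * (E0 r * f_dist lam (pc i) r)) 1 Nf.
Proof. unfold mixture_density. rewrite <- sum_n_m_Rmult_l. apply sum_n_m_Rext. intros; ring. Qed.

Lemma ex_RInt_Ec_star_trunc_mixture w Nf pc y : 0 <= y ->
  ex_RInt (fun r => E0 r * mixture_density w Nf lam pc r) 0 y.
Proof.
  intros Hy.
  apply (ex_RInt_ext (fun r => sum_n_m (fun i => w i * (E0 r * f_dist lam (pc i) r)) 1 Nf)).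
  { intros; symmetry; apply Ec_star_trunc_mul_mixture. }
  apply (ex_RInt_sum_n_m (fun i r => w i * (E0 r * f_dist lam (pc i) r))). intros i _.
  apply (ex_RInt_scal (V := R_NormedModule)), ex_RInt_Ec_star_trunc_f_dist. lra.
Qed.

Lemma Ebar_eq_RInt beta Nf pc rc : 0 <= rc ->
  Ebar beta lam Nf F W sigma2 eta Pc Pmax alpha pc rc =
  RInt (fun r => E0 r * mixture_density (p_r beta Nf) Nf lam pc r) 0 rc.
Proof.
  intros Hrc.
  set (f := fun i r => p_r beta Nf i * (E0 r * f_dist lam (pc i) r)).
  rewrite (RInt_ext _ (fun r => sum_n_m (fun i => f i r) 1 Nf))
    by (intros; apply Ec_star_trunc_mul_mixture).
  symmetry. transitivity (sum_n_m (fun i => RInt (f i) 0 rc) 1 Nf).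
  { apply RInt_sum_n_m. intros i _.
    apply (ex_RInt_scal (V := R_NormedModule)), ex_RInt_Ec_star_trunc_f_dist. lra. }
  apply sum_n_m_Rext. intros i _. unfold f.
  rewrite RInt_Rscal by (apply ex_RInt_Ec_star_trunc_f_dist; lra). f_equal.
  apply RInt_ext. intros r Hr. rewrite Rmin_left, Rmax_right in Hr by lra.
  unfold E0, Ec_star_trunc. destruct (Rlt_dec 0 r); [reflexivity|lra].
Qed.

End EnergyIntegral.

Theorem proposition3 (Nf : nat) (beta lam F W sigma2 eta Pc Pmax alpha : R)
  (pc_star : R -> nat -> R) :
  (1 <= Nf)%nat -> 0 < beta -> 0 < lam ->
  0 < F -> 0 < W -> 0 < sigma2 -> 0 < eta -> 0 < Pc -> 0 < Pmax -> 0 < alpha ->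
  (forall rc, 0 < rc -> optimal_pc beta lam Nf rc (pc_star rc)) ->
  forall r1 r2, 0 < r1 -> r1 < r2 ->
    p_o beta lam Nf (pc_star r1) r1 <= p_o beta lam Nf (pc_star r2) r2 /\
    Ebar beta lam Nf F W sigma2 eta Pc Pmax alpha (pc_star r1) r1
      <= Ebar beta lam Nf F W sigma2 eta Pc Pmax alpha (pc_star r2) r2.
Proof.
  intros HN Hbeta Hlam HF HW Hs He HPc HPm Ha Hopt r1 r2 Hr1 Hr12.
  assert (Hp := Hopt r1 Hr1). assert (Hq := Hopt r2 ltac:(lra)).
  split; [apply p_o_optimal_monotone; auto; lra|].
  assert (Hw : forall i, 0 <= p_r beta Nf i) by (intros; apply Rlt_le, p_r_pos; auto).
  pose proof Hp as [[_ Hpnn] _]. pose proof Hq as [[_ Hqnn] _].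
  rewrite !Ebar_eq_RInt by (auto; lra).
  apply (RInt_stochastic_dominance _ _ _ 0 r1 r2
           (sum_n_m (fun i => p_r beta Nf i * (2 * PI * r1 * lam * pc_star r1 i)) 1 Nf));
    try lra.
  - intros; apply Ec_star_trunc_monotone; auto; lra.
  - apply Ec_star_trunc_nonneg; auto.
  - intros; apply mixture_density_nonneg; auto; lra.
  - intros; apply mixture_density_nonneg; auto; lra.
  - intros; apply mixture_density_le; auto; lra.
  - apply ex_RInt_mixture_density.
  - apply ex_RInt_mixture_density.
  - apply ex_RInt_Ec_star_trunc_mixture; auto; lra.
  - apply ex_RInt_Ec_star_trunc_mixture; auto; lra.
  - intros x Hx. rewrite !RInt_mixture_density. apply optimal_tail_dominance; auto; lra.
Qed.
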